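(* Let $S\subseteq\mathbb N^d$ be a good semigroup, $E\subsetneq S$ a proper good ideal, and $A=S\setminus E=\bigcup_{i=1}^NA_i$ its partition into levels. Let $\boldsymbol\alpha\in A_i$ with $i<N$. Then for every $k=1,\dots,d$ there exists $\boldsymbol\beta^{(k)}\in A_{i+1}$ with $\boldsymbol\beta^{(k)}\ge\boldsymbol\alpha$ and $\beta^{(k)}_k>\alpha_k$.
   Context: Notation: on $\mathbb{Z}^d$, $\le$ componentwise, $\boldsymbol\alpha\ll\boldsymbol\beta$ means $\alpha_i<\beta_i$ for all $i$, $\boldsymbol\alpha\le\le\boldsymbol\beta$ means $=$ or $\ll$, $\wedge$ componentwise minimum, $I=\{1,\dots,d\}$, $\Delta^S_F(\boldsymbol\alpha)=\{\boldsymbol\beta\in S:\beta_i=\alpha_i\ (i\in F),\ \beta_j>\alpha_j\ (j\notin F)\}$. A good semigroup is a submonoid $S$ of $(\mathbb{N}^d,+)$ closed under $\wedge$ (G1), satisfying (G2): if $\boldsymbol\alpha\neq\boldsymbol\beta\in S$ and $\alpha_i=\beta_i$, there is $\boldsymbol\epsilon\in S$ with $\epsilon_i>\alpha_i$, $\epsilon_j\ge\min\{\alpha_j,\beta_j\}$ for $j\ne i$, with equality if $\alpha_j\ne\beta_j$; and (G3): $\boldsymbol c+\mathbb N^d\subseteq S$ for some $\boldsymbol c$. A good ideal is $E\subseteq S$ with $E+S\subseteq E$ satisfying (G1)–(G3). Levels: $\boldsymbol\alpha\in B$ is a complete infimum of $\boldsymbol\beta^{(1)},\dots,\boldsymbol\beta^{(r)}\in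 B$ ($r\ge2$) if $\boldsymbol\beta^{(j)}\in\Delta^S_{F_j}(\boldsymbol\alpha)$ with $\emptyset\ne F_j\subsetneq I$, $\boldsymbol\beta^{(j)}\wedge\boldsymbol\beta^{(k)}=\boldsymbol\alpha$ ($j\ne k$), $\bigcap F_j=\emptyset$. $B^{(1)}$ = maximal elements of $A$ for $\le\le$, $C^{(1)}$ = those that are complete infima of $r$ elements of $B^{(1)}$ ($1<r\le d$), $D^{(1)}=B^{(1)}\setminus C^{(1)}$; inductively for $A\setminus\bigcup_{j<i}D^{(j)}$; $A=\bigsqcup_{i=1}^ND^{(i)}$, $A_i=D^{(N+1-i)}$. *)

From mathcomp Require Import all_boot.
Set Implicit Arguments. Unset Strict Implicit. Unset Printing Implicit Defensive.

(* Elements of N^d, indexed by I = 'I_d (0-based coordinates). *)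
Definition vec (d : nat) := {ffun 'I_d -> nat}.

Section Defs.
Variable d : nat.
Implicit Types (a b c v : vec d) (X S E A B : vec d -> Prop).

Definition vzero : vec d := [ffun _ => 0].
Definition vadd a b : vec d := [ffun i => a i + b i].
Definition vmeet a b : vec d := [ffun i => minn (a i) (b i)].
Definition vle a b := forall i, a i <= b i.
Definition vll a b := forall i, a i < b i.

Definition G1 X := forall a b, X a -> X b -> X (vmeet a b).
Definition G2 X := forall a b, X a -> X b -> a <> b -> forall i : 'I_d, a i = b i ->
  exists e, X e /\ a i < e i /\
    forall j : 'I_d, j <> i ->
      minn (a j) (b j) <= e j /\ (a j <> b j -> e j = minn (a j) (b j)).
Definition G3 X := exists c, forall v, vle c v -> X v.

Definition good_semigroup S :=
  [/\ S vzero, (forall a b, S a -> S b -> S (vadd a b)), G1 S, G2 S & G3 S].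

Definition good_ideal S E :=
  [/\ (forall a, E a -> S a), (forall a b, E a -> S b -> E (vadd a b)),
      G1 E, G2 E & G3 E].

Definition Adiff S E := fun a => S a /\ ~ E a.

Definition Delta S (F : {set 'I_d}) a b :=
  S b /\ forall i : 'I_d, (i \in F -> b i = a i) /\ (i \notin F -> a i < b i).

Definition complete_infimum S B a (r : nat) (bt : 'I_r -> vec d) :=
  [/\ 2 <= r, B a, (forall j, B (bt j)) &
   exists F : 'I_r -> {set 'I_d},
     [/\ forall j, F j != set0 /\ F j != setT /\ Delta S (F j) a (bt j),
         forall j k, j <> k -> vmeet (bt j) (bt k) = a &
         \bigcap_(j < r) F j = set0]].

Definition maxel X a := X a /\ forall b, X b -> ~ vll a b.

Definition Cset S B a :=
  B a /\ exists r, (1 < r <= d) /\ exists bt : 'I_r -> vec d, complete_infimum S B a bt.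

Definition Dset S X a := maxel X a /\ ~ Cset S (maxel X) a.

(* remA S A n = A \ (D^(1) u ... u D^(n))  (so remA 0 = A) *)
Fixpoint remA S A (n : nat) : vec d -> Prop :=
  match n with
  | 0 => A
  | n'.+1 => fun a => remA S A n' a /\ ~ Dset S (remA S A n') a
  end.

Definition levelD S A (i : nat) := Dset S (remA S A i.-1).

Definition num_levels S A (N : nat) :=
  (forall a, ~ remA S A N a) /\ (forall n, n < N -> exists a, remA S A n a).

Definition level S A (N i : nat) := levelD S A (N.+1 - i).

End Defs.

(* Let X = A \ (D^(1) u ... u D^(n)) be the stage whose maximal non-infimum
   elements form A_(i+1), so that A_i consists of elements of X outside D(X).
   An element z of X outside D(X) is either not maximal, hence below some
   element of X in the order <<, or a complete infimum of beta^(1), ..., beta^(r)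
   with empty common face, so for every coordinate l some beta^(j) >= z has
   beta^(j)_l > z_l.  Either way z can be raised inside X in any prescribed
   coordinate.  If no element of D(X) dominated alpha as required, the set of
   elements of X that do would be closed under such raising, hence would contain
   elements above the conductor of E, contradicting X \subseteq S \ E. *)
From Stdlib Require Import Classical.
From mathcomp Require Import all_boot.
From mathcomp Require Import zify.

Set Implicit Arguments.
Unset Strict Implicit.

Section Levels.
Variable d : nat.
Implicit Types (a b c v w z : vec d) (S X V A : vec d -> Prop).

Lemma vle_refl a : vle a a.
Proof. by move=> i. Qed.

Lemma vle_trans a b c : vle a b -> vle b c -> vle a c.
Proof. by move=> ab bc i; apply: leq_trans (ab i) (bc i). Qed.

Definition raisable X z :=
  forall l : 'I_d, exists z', X z' /\ vle z z' /\ z l < z' l.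

Lemma raisable_coord_ge V (l : 'I_d) m z :
  (forall z, V z -> raisable V z) -> V z -> exists w, V w /\ vle z w /\ m <= w l.
Proof.
move=> V_raisable; elim: m z => [|m IH] z Vz.
  by exists z; split=> //; split=> //; apply: vle_refl.
have [w [Vw [zw mw]]] := IH z Vz.
have [w' [Vw' [ww' ww'l]]] := V_raisable w Vw l.
by exists w'; split=> //; split; [apply: vle_trans zw ww' | apply: leq_ltn_trans mw ww'l].
Qed.

Lemma raisable_above V c z :
  (forall z, V z -> raisable V z) -> V z -> exists w, V w /\ vle c w.
Proof.
move=> V_raisable Vz.
have raise_on (s : seq 'I_d) :
    exists w, V w /\ vle z w /\ {in s, forall l, c l <= w l}.
  elim: s => [|l s [w [Vw [zw cw]]]].
    by exists z; split=> //; split=> //; apply: vle_refl.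
  have [w' [Vw' [ww' cw']]] := raisable_coord_ge l (c l) V_raisable Vw.
  exists w'; split=> //; split; first exact: vle_trans zw ww'.
  by move=> j; rewrite inE => /predU1P [-> // | js]; apply: leq_trans (cw j js) (ww' j).
have [w [Vw [_ cw]]] := raise_on (enum 'I_d).
by exists w; split=> // l; apply: cw; rewrite mem_enum.
Qed.

Lemma Delta_vle S F a b : Delta S F a b -> vle a b.
Proof.
move=> [_ Dab] i; have [eq_i lt_i] := Dab i.
by case: (boolP (i \in F)) => [/eq_i -> // | /lt_i /ltnW].
Qed.

Lemma Cset_raisable S X z : Cset S X z -> raisable X z.
Proof.
move=> [_ [r [_ [bt [_ _ Xbt [F [Fbt _ capF]]]]]]] l.
have /existsP [j l_notin_Fj] : [exists j, l \notin F j].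
  rewrite -negb_forall; apply/negP => /forallP l_in_F.
  have : l \in \bigcap_(j < r) F j by apply/bigcapP => j _; apply: l_in_F.
  by rewrite capF inE.
have [_ [_ Dbt]] := Fbt j.
exists (bt j); split=> //; split; first exact: Delta_vle Dbt.
by case: Dbt => _ /(_ l) [_ ->].
Qed.

Lemma not_maxel_vll X z : X z -> ~ maxel X z -> exists b, X b /\ vll z b.
Proof.
move=> Xz not_max; apply: NNPP => no_b; apply: not_max; split=> // b Xb zb.
by apply: no_b; exists b.
Qed.

Lemma raisable_notDset S X z : X z -> ~ Dset S X z -> raisable X z.
Proof.
move=> Xz not_D l; case: (classic (maxel X z)) => [max_z | not_max].
  have C_z : Cset S (maxel X) z by apply: NNPP => not_C; apply: not_D.
  have [b [[Xb _] zb]] := Cset_raisable C_z l.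
  by exists b.
have [b [Xb zb]] := not_maxel_vll Xz not_max.
by exists b; split=> //; split=> [i|]; [apply: ltnW | apply: zb].
Qed.

Lemma Dset_above S X c a (k : 'I_d) :
  (forall v, vle c v -> ~ X v) -> X a -> ~ Dset S X a ->
  exists b, Dset S X b /\ vle a b /\ a k < b k.
Proof.
move=> X_bounded Xa not_Da; apply: NNPP => no_b.
pose V z := X z /\ vle a z /\ a k < z k.
have V_raisable z : V z -> raisable V z.
  move=> [Xz [az akz]] l.
  have not_Dz : ~ Dset S X z by move=> Dz; apply: no_b; exists z.
  have [z' [Xz' [zz' lz']]] := raisable_notDset Xz not_Dz l.
  exists z'; split=> //; split=> //; split; first exact: vle_trans az zz'.
  exact: leq_trans akz (zz' k).
have [z0 Vz0] := raisable_notDset Xa not_Da k.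
have [w [[Xw _] cw]] := raisable_above c V_raisable Vz0.
exact: X_bounded cw Xw.
Qed.

Lemma remA_sub S A n a : remA S A n a -> A a.
Proof. by elim: n a => [|n IH] a //= [/IH]. Qed.

Lemma levelD_next S A n a : levelD S A n.+2 a -> remA S A n a /\ ~ levelD S A n.+1 a.
Proof. by move=> [[]]. Qed.

End Levels.

Theorem lemma3p5 (d : nat) (S E : vec d -> Prop) :
  good_semigroup S -> good_ideal S E -> (exists s, S s /\ ~ E s) ->
  forall N : nat, num_levels S (Adiff S E) N ->
  forall i : nat, 1 <= i < N ->
  forall a : vec d, level S (Adiff S E) N i a ->
  forall k : 'I_d, exists b : vec d,
    level S (Adiff S E) N i.+1 b /\ vle a b /\ a k < b k.
Proof.
move=> _ [_ _ _ _ [c E_conductor]] _ N _ i /andP [i_gt0 lt_iN] a.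
rewrite /level.
have -> : N.+1 - i = (N - i.+1).+2 by lia.
have -> : N.+1 - i.+1 = (N - i.+1).+1 by lia.
move=> /levelD_next [Xa not_Da] k.
apply: (Dset_above (c := c)) Xa not_Da => v cv /remA_sub [_]; apply; exact: E_conductor.
Qed.
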